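(* Let $\zeta_5$ be a primitive $5$-th root of unity. (1) $\left\{\mathcal{S}_{\frac{r}{s}}(\zeta_5) : \tfrac{r}{s}>0\right\}=\{0,\ c,\ (1+\zeta_5)c,\ (1-\zeta_5^2)c : c=\pm\zeta_5^j,\ j=0,1,\dots,4\}$. (2) For coprime positive integers $r,s$, $\mathcal{S}_{\frac{r}{s}}(\zeta_5)=0$ if and only if $s\in 5\mathbb{Z}$ and $r\equiv 1$ or $4 \pmod 5$.
   Context: Let $q$ be a formal parameter, $R_q=\begin{pmatrix} q & 1\\ 0 & 1\end{pmatrix}$, $S_q=\begin{pmatrix} 0 & -q^{-1}\\ 1 & 0\end{pmatrix}$, and for integers $c_1,\dots,c_k$ put $M_q(c_1,\dots,c_k)=R_q^{c_1}S_qR_q^{c_2}S_q\cdots R_q^{c_k}S_q$. Every irreducible fraction $\frac{r}{s}>1$ ($r,s$ positive coprime integers) has a unique negative (Hirzebruch–Jung) continued fraction expansion $\frac{r}{s}=c_1-\cfrac{1}{c_2-\cfrac{1}{\ddots-\cfrac{1}{c_k}}}$ with all $c_i\ge 2$; for such $\frac rs$ define polynomials $\mathcal{R}_{\frac rs}(q),\mathcal{S}_{\frac rs}(q)$ as the first column of $M_q(c_1,\dots,c_k)$, i.e. $M_q(c_1,\dots,c_k)=\begin{pmatrix}\mathcal{R}_{\frac rs}(q) & *\\ \mathcal{S}_{\frac rs}(q) & *\end{pmatrix}$. For an arbitrary rational number $x=\frac rs$ (in lowest terms, $s>0$), define $\mathcal{S}_x(q):=\mathcal{S}_{x+m}(q)$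 for any integer $m$ with $x+m>1$ (this is independent of $m$); equivalently $\mathcal{S}_x$ is the denominator, normalized to lie in $\mathbb{Z}[q]$ with constant term $1$, of the $q$-deformed rational $[x]_q$ defined by $[x]_q=\mathcal{R}_x/\mathcal{S}_x$ for $x>1$ and $[x+1]_q=q[x]_q+1$. *)

From HB Require Import structures.
From mathcomp Require Import all_boot all_order all_algebra all_field.
Set Implicit Arguments. Unset Strict Implicit. Unset Printing Implicit Defensive.
Import Order.TTheory GRing.Theory Num.Theory.
Local Open Scope ring_scope.

(* Negative (Hirzebruch-Jung) continued fraction of r/s (r > s >= 1 coprime):
   r/s = c1 - 1/(c2 - ... - 1/ck), all ci >= 2.
   c1 = ceil(r/s); if c1*s = r we stop, otherwise continue with s/(c1*s - r).
   The fuel argument (taken to be s.+1) bounds the number of steps, since the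
   denominator strictly decreases. *)
Fixpoint hj_aux (fuel r s : nat) : seq nat :=
  match fuel with
  | 0 => [::]
  | fuel'.+1 =>
      let c := ((r + s).-1 %/ s)%N in
      if (c * s == r)%N then [:: c] else c :: hj_aux fuel' s (c * s - r)
  end.

Definition hj (r s : nat) : seq nat := hj_aux s.+1 r s.

Section Mats.
Variable F : fieldType.
Variable q : F.

Definition Rq : 'M[F]_2 :=
  \matrix_(i < 2, j < 2)
    (if (i == 0 :> nat)%N then (if (j == 0 :> nat)%N then q else 1) else
       (if (j == 0 :> nat)%N then 0 else 1)).

Definition Sq : 'M[F]_2 :=
  \matrix_(i < 2, j < 2)
    (if (i == 0 :> nat)%N then (if (j == 0 :> nat)%N then 0 else - q^-1) else
       (if (j == 0 :> nat)%N then 1 else 0)).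

Definition Mq (cs : seq nat) : 'M[F]_2 :=
  foldr (fun c M => Rq ^+ c * Sq * M) 1 cs.

(* Value at q of the polynomial S_{r/s} for r/s > 1 (r,s coprime): the (2,1)
   entry of M_q(c1,...,ck).  Evaluating the matrix product at a nonzero q is
   the same as evaluating the polynomial S_{r/s} at q. *)
Definition Sfrac (r s : nat) : F := Mq (hj r s) (inord 1) (inord 0).

(* S_x(q) for an arbitrary rational x = numq x / denq x:
   S_x := S_{x+m} with m = |numq x| + 2, so that x + m > 1. *)
Definition Sval (x : rat) : F :=
  let m : int := Posz (absz (numq x) + 2)%N in
  Sfrac (absz (numq x + m * denq x)) (absz (denq x)).
End Mats.

From HB Require Import structures.
From mathcomp Require Import all_boot all_order all_algebra all_field.
From mathcomp Require Import ring zify.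
Set Implicit Arguments. Unset Strict Implicit. Unset Printing Implicit Defensive.
Import Order.TTheory GRing.Theory Num.Theory.
Local Open Scope ring_scope.

(* At q = z, a primitive 5th root of unity, the matrices R_q and S_q have
   entries in Z[z] (as z^-1 = z^4), so the first column of M_z(c_1, ..., c_k) is
   obtained from (1, 0) by iterating two Z-linear maps of Z[z]^2.  The orbit of
   (1, 0) under these maps is finite (120 vectors) and is enumerated by
   computation; their second entries are 0 and the 30 values +-z^j,
   +-(1 + z) z^j, +-(1 - z^2) z^j, each of which is S_x(z) for an explicit
   x > 0.  Reducing modulo 1 - z turns the first column at z into the first
   column at q = 1 modulo 5, which for the Hirzebruch-Jung expansion of r/s is
   (r, s); on the orbit, the second entry vanishes exactly when this reduction
   is (+-1, 0). *)

Definition word_act (T : Type) (r s : T -> T) (x : T) (cs : seq nat) : T :=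
  foldr (fun c y => iter c r (s y)) x cs.

Lemma word_act_sim (T U : Type) (r s : T -> T) (r' s' : U -> U)
    (rel : T -> U -> Prop) x x' cs :
  (forall y y', rel y y' -> rel (r y) (r' y')) ->
  (forall y y', rel y y' -> rel (s y) (s' y')) ->
  rel x x' -> rel (word_act r s x cs) (word_act r' s' x' cs).
Proof.
move=> relr rels relx; elim: cs => //= c cs IH.
by elim: c => [|c IHc] /=; [exact: rels | exact: relr].
Qed.

Lemma word_act_inv (T : Type) (r s : T -> T) (P : pred T) x cs :
  (forall y, P y -> P (r y)) -> (forall y, P y -> P (s y)) ->
  P x -> P (word_act r s x cs).
Proof.
move=> Pr Ps Px.
by apply: (word_act_sim (rel := fun y (_ : T) => P y) (x' := x)) => // y _ /=;
  [exact: Pr | exact: Ps].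
Qed.

Lemma Mq_word_act (F : fieldType) (q : F) cs :
  Mq q cs = word_act (GRing.mul (Rq q)) (GRing.mul (Sq q)) 1 cs.
Proof.
elim: cs => //= c cs <-; elim: c => [|c IH] /=; first by rewrite expr0 mul1r.
by rewrite -IH exprS !mulrA.
Qed.

Lemma mulmx2_col0 (F : fieldType) (A B : 'M[F]_2) i :
  (A * B) i 0 = A i 0 * B 0 0 + A i 1 * B 1 0.
Proof.
rewrite -mulmxE mxE big_ord_recl big_ord1.
by have -> : lift ord0 ord0 = 1 :> 'I_2 by apply/val_inj.
Qed.

Lemma Rq_mul_col0 (F : fieldType) (q : F) (M : 'M[F]_2) :
  (Rq q * M) 0 0 = q * M 0 0 + M 1 0 /\ (Rq q * M) 1 0 = M 1 0.
Proof. by rewrite !mulmx2_col0 !mxE /=; split; ring. Qed.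

Lemma Sq_mul_col0 (F : fieldType) (q : F) (M : 'M[F]_2) :
  (Sq q * M) 0 0 = - q^-1 * M 1 0 /\ (Sq q * M) 1 0 = M 0 0.
Proof. by rewrite !mulmx2_col0 !mxE /=; split; ring. Qed.

(* [(a0, a1, a2, a3)] codes a0 + a1 z + a2 z^2 + a3 z^3 in Z[z], z a primitive
   5th root of unity; since 1, z, z^2, z^3 is a Z-basis, equal elements have
   equal codes. *)
Definition cyc5 := (int * int * int * int)%type.

Definition cyc5_0 : cyc5 := (0, 0, 0, 0).
Definition cyc5_1 : cyc5 := (1, 0, 0, 0).

Definition cyc5_add (a b : cyc5) : cyc5 :=
  let: (a0, a1, a2, a3) := a in let: (b0, b1, b2, b3) := b in
  (a0 + b0, a1 + b1, a2 + b2, a3 + b3).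

Definition cyc5_opp (a : cyc5) : cyc5 :=
  let: (a0, a1, a2, a3) := a in (- a0, - a1, - a2, - a3).

(* Uses z^4 = - 1 - z - z^2 - z^3. *)
Definition cyc5_mulz (a : cyc5) : cyc5 :=
  let: (a0, a1, a2, a3) := a in (- a3, a0 - a3, a1 - a3, a2 - a3).

Definition cyc5_sum (a : cyc5) : int :=
  let: (a0, a1, a2, a3) := a in a0 + a1 + a2 + a3.

Definition cyc5_eval (R : comPzRingType) (z : R) (a : cyc5) : R :=
  let: (a0, a1, a2, a3) := a in
  a0%:~R + a1%:~R * z + a2%:~R * z ^+ 2 + a3%:~R * z ^+ 3.

Section Cyc5Eval.
Variables (R : comPzRingType) (z : R).
Hypothesis z_cyclotomic : 1 + z + z ^+ 2 + z ^+ 3 + z ^+ 4 = 0.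

Lemma cyc5_eval0 : cyc5_eval z cyc5_0 = 0.
Proof. by rewrite /= !mul0r !addr0. Qed.

Lemma cyc5_eval1 : cyc5_eval z cyc5_1 = 1.
Proof. by rewrite /= !mul0r !addr0. Qed.

Lemma cyc5_evalD a b :
  cyc5_eval z (cyc5_add a b) = cyc5_eval z a + cyc5_eval z b.
Proof. by case: a b => [[[? ?] ?] ?] [[[? ?] ?] ?] /=; rewrite !intrD; ring. Qed.

Lemma cyc5_evalN a : cyc5_eval z (cyc5_opp a) = - cyc5_eval z a.
Proof. by case: a => [[[? ?] ?] ?] /=; rewrite !intrN; ring. Qed.

Lemma cyc5_eval_mulz a : cyc5_eval z (cyc5_mulz a) = z * cyc5_eval z a.
Proof.
case: a => [[[a0 a1] a2] a3] /=.
rewrite -[LHS]addr0 -(mulr0 a3%:~R) -z_cyclotomic !intrB intrN; ring.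
Qed.

Lemma cyc5_eval_iter_mulz n a :
  cyc5_eval z (iter n cyc5_mulz a) = z ^+ n * cyc5_eval z a.
Proof.
elim: n => [|n IH] /=; first by rewrite mul1r.
by rewrite cyc5_eval_mulz IH exprS mulrA.
Qed.

End Cyc5Eval.

(* Left multiplication by R_q and S_q acts on a first column (x, y) as
   (x, y) |-> (q x + y, y) and (x, y) |-> (- q^-1 y, x); here q = z and
   z^-1 = z^4.  The int versions below are the same maps at q = 1. *)
Definition cyc5_colR (v : cyc5 * cyc5) : cyc5 * cyc5 :=
  (cyc5_add (cyc5_mulz v.1) v.2, v.2).

Definition cyc5_colS (v : cyc5 * cyc5) : cyc5 * cyc5 :=
  (cyc5_opp (iter 4 cyc5_mulz v.2), v.1).

Definition cyc5_column : seq nat -> cyc5 * cyc5 :=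
  word_act cyc5_colR cyc5_colS (cyc5_1, cyc5_0).

Definition int_colR (v : int * int) : int * int := (v.1 + v.2, v.2).
Definition int_colS (v : int * int) : int * int := (- v.2, v.1).

Lemma iter_int_colR c v : iter c int_colR v = (v.1 + c%:Z * v.2, v.2).
Proof.
elim: c => [|c IH] /=; first by rewrite mul0r addr0; case: v.
by rewrite IH /int_colR /= -addn1 PoszD; congr (_, _); ring.
Qed.

Lemma hj_aux_int_column fuel r s : (0 < s < fuel)%N -> coprime r s ->
  word_act int_colR int_colS (1, 0) (hj_aux fuel r s) = (r%:Z, s%:Z).
Proof.
elim: fuel r s => [|fuel IH] r s /andP[s_gt0 s_le] co //=.
set c := ((r + s).-1 %/ s)%N.
have /andP[r_le_cs cs_lt] : (r <= c * s < r + s)%N.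
  have := divn_eq (r + s).-1 s; have := ltn_pmod (r + s).-1 s_gt0.
  rewrite -/c; lia.
case: eqP => [cs_r | /eqP cs_neq_r].
  have s_eq1 : s = 1%N.
    have : (s %| gcdn r s)%N by rewrite dvdn_gcd dvdnn -cs_r dvdn_mull.
    by rewrite (eqP co) dvdn1 => /eqP.
  by rewrite /= iter_int_colR /= -cs_r s_eq1 muln1; congr (_, _); lia.
set d := (c * s - r)%N.
have co_sd : coprime s d.
  rewrite /coprime -dvdn1 -(eqP co) dvdn_gcd dvdn_gcdl andbT.
  have : (gcdn s d %| d + r)%N by rewrite subnK // dvdn_mull // dvdn_gcdl.
  by rewrite dvdn_addr // dvdn_gcdr.
rewrite /= IH //; last by apply/andP; split; rewrite /d; lia.
by rewrite iter_int_colR /=; congr (_, _); rewrite /d; lia.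
Qed.

Lemma hj_int_column r s : (0 < s)%N -> coprime r s ->
  word_act int_colR int_colS (1, 0) (hj r s) = (r%:Z, s%:Z).
Proof. by move=> s_gt0; apply: hj_aux_int_column; rewrite s_gt0 /=. Qed.

Lemma cyc5_sum_add a b : cyc5_sum (cyc5_add a b) = cyc5_sum a + cyc5_sum b.
Proof. by case: a b => [[[? ?] ?] ?] [[[? ?] ?] ?] /=; ring. Qed.

Lemma cyc5_sum_opp a : cyc5_sum (cyc5_opp a) = - cyc5_sum a.
Proof. by case: a => [[[? ?] ?] ?] /=; ring. Qed.

Lemma cyc5_sum_mulz a : (5 %| cyc5_sum (cyc5_mulz a) - cyc5_sum a)%Z.
Proof.
case: a => [[[a0 a1] a2] a3] /=.
have -> : - a3 + (a0 - a3) + (a1 - a3) + (a2 - a3) - (a0 + a1 + a2 + a3) =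
  - a3 * 5 by ring.
exact/dvdz_mull/dvdzz.
Qed.

Lemma cyc5_sum_iter_mulz n a :
  (5 %| cyc5_sum (iter n cyc5_mulz a) - cyc5_sum a)%Z.
Proof.
elim: n => [|n IH] /=; first by rewrite subrr dvdz0.
rewrite -[X in (_ %| X)%Z](subrKA (cyc5_sum (iter n cyc5_mulz a))).
by rewrite rpredD // cyc5_sum_mulz.
Qed.

(* The coefficient sum modulo 5 is the ring map Z[z] -> Z[z]/(1 - z) = Z/5
   sending z to 1, so it carries the column at q = z to the column at q = 1. *)
Lemma cyc5_column_mod5 cs :
  let v := cyc5_column cs in let w := word_act int_colR int_colS (1, 0) cs in
  (5 %| cyc5_sum v.1 - w.1)%Z /\ (5 %| cyc5_sum v.2 - w.2)%Z.
Proof.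
apply: (word_act_sim (rel := fun v (w : int * int) =>
  (5 %| cyc5_sum v.1 - w.1)%Z /\ (5 %| cyc5_sum v.2 - w.2)%Z)) => //.
- move=> [x y] [a b] /= [hx hy]; split=> //; rewrite cyc5_sum_add.
  have -> : cyc5_sum (cyc5_mulz x) + cyc5_sum y - (a + b) =
    cyc5_sum (cyc5_mulz x) - cyc5_sum x + (cyc5_sum x - a) + (cyc5_sum y - b)
    by ring.
  by apply: rpredD hy; apply: rpredD hx; exact: cyc5_sum_mulz.
- move=> [x y] [a b] /= [hx hy]; split=> //; rewrite cyc5_sum_opp.
  have -> : - cyc5_sum (iter 4 cyc5_mulz y) - - b =
    - (cyc5_sum (iter 4 cyc5_mulz y) - cyc5_sum y + (cyc5_sum y - b)) by ring.
  by rewrite rpredN; apply: rpredD hy; exact: cyc5_sum_iter_mulz.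
Qed.

Definition vanishing_residues (a b : int) : bool :=
  (b %% 5 == 0)%Z && ((a %% 5 == 1)%Z || (a %% 5 == 4)%Z).

Lemma vanishing_residues_mod5 a b a' b' :
  (5 %| a - a')%Z -> (5 %| b - b')%Z ->
  vanishing_residues a b = vanishing_residues a' b'.
Proof. by rewrite -!eqz_mod_dvd /vanishing_residues => /eqP-> /eqP->. Qed.

Lemma vanishing_residues_frac r s :
  vanishing_residues (r + (r + 2) * s)%N s =
  (5 %| s)%N && ((r %% 5 == 1) || (r %% 5 == 4))%N.
Proof.
rewrite /vanishing_residues !modz_nat /dvdn !eqz_nat.
have [/dvdnP[k ->] | ] := boolP (5 %| s)%N; last by rewrite /dvdn => /negbTE ->.
by rewrite modnMl eqxx mulnA addnC modnMDl.
Qed.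

Definition cyc5_base (k : nat) : cyc5 :=
  nth cyc5_1 [:: cyc5_1; (1, 1, 0, 0); (1, 0, -1, 0)] k.

Definition cyc5_target (b : bool) (j k : nat) : cyc5 :=
  let a := iter j cyc5_mulz (cyc5_base k) in if b then cyc5_opp a else a.

Definition cyc5_targets : seq cyc5 :=
  [seq cyc5_target bj.1 bj.2 k
  | bj <- [seq (b, j) | b <- [:: false; true], j <- iota 0 5], k <- iota 0 3].

Lemma cyc5_targetsP a :
  reflect (exists b j k, [/\ j < 5, k < 3 & a = cyc5_target b j k])%N
          (a \in cyc5_targets).
Proof.
apply: (iffP allpairsP) =>
    [[[bj k] [bj_in k_in ->]] | [b [j [k [j_lt k_lt ->]]]]].
  case/allpairsP: bj_in => -[b j] [_ j_in ->] /=.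
  by move: j_in k_in; rewrite !mem_iota => j_lt k_lt; exists b, j, k.
exists ((b, j), k); split; rewrite ?mem_iota //.
by apply: allpairs_f; rewrite ?mem_iota //; case: b.
Qed.

Definition orbit_step (W : seq (cyc5 * cyc5)) : seq (cyc5 * cyc5) :=
  undup (W ++ map cyc5_colR W ++ map cyc5_colS W).

Definition column_orbit : seq (cyc5 * cyc5) :=
  iter 13 orbit_step [:: (cyc5_1, cyc5_0)].

Lemma column_orbit_closed :
  all (fun v => (cyc5_colR v \in column_orbit) && (cyc5_colS v \in column_orbit))
      column_orbit.
Proof. by vm_compute. Qed.

Lemma cyc5_column_in_orbit cs : cyc5_column cs \in column_orbit.
Proof.
apply: (word_act_inv (P := fun v => v \in column_orbit)); last by vm_compute.
- by move=> v /(allP column_orbit_closed)/andP[].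
- by move=> v /(allP column_orbit_closed)/andP[].
Qed.

Lemma column_orbit_values :
  all (fun v => if vanishing_residues (cyc5_sum v.1) (cyc5_sum v.2)
                then v.2 == cyc5_0 else v.2 \in cyc5_targets) column_orbit.
Proof. by vm_compute. Qed.

Lemma Sval_frac (F : fieldType) (q : F) r s : (0 < s)%N -> coprime r s ->
  Sval q (r%:Q / s%:Q) = Sfrac q (r + (r + 2) * s) s.
Proof.
move=> s_gt0 co.
have num_rs : numq (r%:Q / s%:Q) = r%:Z.
  by rewrite coprimeq_num // gtr0_sg ?mul1r // ltz_nat.
have den_rs : denq (r%:Q / s%:Q) = s%:Z.
  by rewrite coprimeq_den //=; case: s s_gt0 {co num_rs}.
by rewrite /Sval /= [numq _]num_rs [denq _]den_rs.
Qed.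

Definition frac_column (p : nat * nat) : cyc5 * cyc5 :=
  cyc5_column (hj (p.1 + (p.1 + 2) * p.2) p.2).

(* Found by a search over 0 < r <= s <= 90. *)
Definition witnesses : seq (nat * nat) :=
  [:: (1, 5); (1, 1); (1, 2); (7, 25); (6, 11); (4, 7); (12, 55); (4, 11);
      (2, 7); (2, 5); (3, 11); (5, 17); (22, 35); (21, 26); (4, 17); (27, 70);
      (11, 19); (5, 13); (18, 25); (2, 9); (3, 13); (3, 10); (3, 14); (5, 23);
      (53, 90); (4, 19); (1, 3); (8, 35); (1, 4); (3, 8); (3, 5)]%N.

Lemma witnesses_pos_coprime :
  all (fun p => [&& 0 < p.1, 0 < p.2 & coprime p.1 p.2]%N) witnesses.
Proof. by []. Qed.

Lemma witnesses_cover :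
  {subset cyc5_0 :: cyc5_targets <= [seq (frac_column p).2 | p <- witnesses]}.
Proof. by apply/allP; vm_compute. Qed.

Section PrimitiveRoot.
Variables (F : fieldType) (z : F).
Hypothesis z_prim : 5.-primitive_root z.

Lemma prim5_cyclotomic : 1 + z + z ^+ 2 + z ^+ 3 + z ^+ 4 = 0.
Proof.
have z_neq1 : z != 1 by rewrite -[z]expr1 -(prim_order_dvd z_prim 1).
have : (z - 1) * (1 + z + z ^+ 2 + z ^+ 3 + z ^+ 4) = 0.
  have -> : (z - 1) * (1 + z + z ^+ 2 + z ^+ 3 + z ^+ 4) = z ^+ 5 - 1 by ring.
  by rewrite prim_expr_order // subrr.
by move/eqP; rewrite mulf_eq0 subr_eq0 (negbTE z_neq1) => /eqP.
Qed.

Lemma prim5_inv : z^-1 = z ^+ 4.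
Proof.
have z_neq0 : z != 0 by rewrite (prim_root_eq0 z_prim).
by rewrite -[z^-1]mulr1 -(prim_expr_order z_prim) exprS mulKf.
Qed.

Lemma Mq_first_column cs :
  Mq z cs 0 0 = cyc5_eval z (cyc5_column cs).1 /\
  Mq z cs 1 0 = cyc5_eval z (cyc5_column cs).2.
Proof.
rewrite Mq_word_act.
apply: (word_act_sim (rel := fun v (M : 'M[F]_2) =>
  M 0 0 = cyc5_eval z v.1 /\ M 1 0 = cyc5_eval z v.2)).
- move=> v M [M0 M1] /=; have [-> ->] := Rq_mul_col0 z M.
  by rewrite cyc5_evalD (cyc5_eval_mulz prim5_cyclotomic) M0 M1.
- move=> v M [M0 M1] /=; have [-> ->] := Sq_mul_col0 z M.
  rewrite cyc5_evalN !(cyc5_eval_mulz prim5_cyclotomic) -M1 prim5_inv.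
  by split=> //; ring.
- by rewrite cyc5_eval0 cyc5_eval1 /= !mxE.
Qed.

Lemma Sfrac_cyc5_column r s : Sfrac z r s = cyc5_eval z (cyc5_column (hj r s)).2.
Proof.
rewrite /Sfrac; have -> : inord 1 = 1 :> 'I_2 by apply/val_inj; rewrite /= inordK.
have -> : inord 0 = 0 :> 'I_2 by apply/val_inj; rewrite /= inordK.
by have [_ <-] := Mq_first_column (hj r s).
Qed.

Lemma cyc5_eval_target b j k :
  cyc5_eval z (cyc5_target b j k) =
  nth 1 [:: 1; 1 + z; 1 - z ^+ 2] k * ((-1) ^+ b * z ^+ j).
Proof.
have eval_base : cyc5_eval z (cyc5_base k) = nth 1 [:: 1; 1 + z; 1 - z ^+ 2] k.
  by case: k => [|[|[|k]]];
    rewrite /cyc5_base /= ?nth_nil /= ?mulr0z ?mulr1z ?mulrN1z; ring.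
rewrite /cyc5_target; case: b => /=;
  rewrite ?cyc5_evalN (cyc5_eval_iter_mulz prim5_cyclotomic) eval_base;
  ring.
Qed.

Lemma cyc5_eval_target_neq0 b j k : cyc5_eval z (cyc5_target b j k) != 0.
Proof.
have z_neq0 : z != 0 by rewrite (prim_root_eq0 z_prim).
have z2_neq1 : z ^+ 2 != 1 by rewrite -(prim_order_dvd z_prim 2).
rewrite cyc5_eval_target !mulf_neq0 ?signr_eq0 ?expf_neq0 //.
case: k => [|[|[|k]]] /=; rewrite ?nth_nil ?oner_eq0 //.
  apply: contra z2_neq1 => /eqP z1_eq0.
  have -> : z = -1 by apply/eqP; rewrite -subr_eq0 opprK addrC z1_eq0.
  by rewrite sqrrN expr1n.
by rewrite subr_eq0 eq_sym.
Qed.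

Lemma target_valuesP w :
  (exists (b : bool) (j : nat), (j < 5)%N /\
     let c := (-1) ^+ b * z ^+ j in
     (w = c \/ w = (1 + z) * c \/ w = (1 - z ^+ 2) * c)) <->
  exists2 a, a \in cyc5_targets & w = cyc5_eval z a.
Proof.
split=> [[b [j [j_lt w_val]]] | [a /cyc5_targetsP[b [j [k [j_lt k_lt ->]]]] ->]].
  have [k k_lt ->] : exists2 k, (k < 3)%N &
      w = nth 1 [:: 1; 1 + z; 1 - z ^+ 2] k * ((-1) ^+ b * z ^+ j).
    case: w_val => [-> | [-> | ->]]; last by exists 2%N.
      by exists 0%N; rewrite ?mul1r.
    by exists 1%N.
  exists (cyc5_target b j k); last by rewrite cyc5_eval_target.
  by apply/cyc5_targetsP; exists b, j, k.
exists b, j; split=> //; rewrite cyc5_eval_target.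
case: k k_lt => [|[|[|]]] //= _; last by right; right.
  by left; rewrite mul1r.
by right; left.
Qed.

Lemma Sval_values w :
  (exists x : rat, 0 < x /\ Sval z x = w) <->
  w = 0 \/ exists2 a, a \in cyc5_targets & w = cyc5_eval z a.
Proof.
split=> [[x [_ <-]] | w_val].
  rewrite /Sval Sfrac_cyc5_column; set v := cyc5_column _.
  have := allP column_orbit_values v (cyc5_column_in_orbit _).
  case: ifP => [_ /eqP-> | _ v_tgt]; first by left; exact: cyc5_eval0.
  by right; exists v.2.
have [a a_in ->] : exists2 a, a \in cyc5_0 :: cyc5_targets & w = cyc5_eval z a.
  case: w_val => [-> | [a a_tgt ->]].
    by exists cyc5_0; rewrite ?mem_head ?cyc5_eval0.
  by exists a; rewrite // in_cons a_tgt orbT.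
have /mapP[[r s] p_in ->] := witnesses_cover a_in.
have /and3P[r_gt0 s_gt0 co] := allP witnesses_pos_coprime _ p_in.
exists (r%:Q / s%:Q); split; first by rewrite divr_gt0 // ltr0n.
by rewrite Sval_frac // Sfrac_cyc5_column.
Qed.

Lemma Sval_frac_eq0 r s : (0 < s)%N -> coprime r s ->
  Sval z (r%:Q / s%:Q) = 0 <-> (5 %| s)%N /\ (r %% 5 = 1 \/ r %% 5 = 4)%N.
Proof.
move=> s_gt0 co.
have co_ns : coprime (r + (r + 2) * s) s.
  by rewrite /coprime gcdnC addnC gcdnMDl gcdnC.
set n := (r + (r + 2) * s)%N in co_ns *.
rewrite Sval_frac // Sfrac_cyc5_column -/n.
have [v1 v2] := cyc5_column_mod5 (hj n s).
rewrite hj_int_column // in v1 v2.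
have := allP column_orbit_values _ (cyc5_column_in_orbit (hj n s)).
rewrite (vanishing_residues_mod5 v1 v2) vanishing_residues_frac.
case: ifP => [/andP[s5 r5] /eqP-> | r5 /cyc5_targetsP[b [j [k [_ _ ->]]]]].
  by rewrite cyc5_eval0; split=> // _; split=> //; case/orP: r5 => /eqP; auto.
split=> [/eqP | [s5 r5']].
  by rewrite (negbTE (cyc5_eval_target_neq0 _ _ _)).
by move: r5; rewrite s5; case: r5' => ->.
Qed.

End PrimitiveRoot.

Theorem corollary3p8 (z : algC) (hz : 5.-primitive_root z) :
  (forall w : algC,
      (exists x : rat, 0 < x /\ Sval z x = w) <->
      (w = 0 \/
       exists (b : bool) (j : nat), (j < 5)%N /\
         let c := (-1) ^+ b * z ^+ j in
         (w = c \/ w = (1 + z) * c \/ w = (1 - z ^+ 2) * c)))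
  /\
  (forall r s : nat, (0 < r)%N -> (0 < s)%N -> coprime r s ->
     (Sval z (r%:Q / s%:Q) = 0 <->
      ((5 %| s)%N /\ (r %% 5 = 1 \/ r %% 5 = 4)%N))).
Proof.
split=> [w | r s _ s_gt0 co]; last exact: Sval_frac_eq0.
have := Sval_values hz w; have := target_valuesP hz w; tauto.
Qed.
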